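(* Let $G=(V,E)$ be an undirected multigraph, $0\le\delta\le 1/3$, and $A\subseteq V$. Let $S\subseteq V$ cross $A$, i.e. $S\cap A\ne\emptyset$ and $A\setminus S\neq\emptyset$. Suppose $S\cap A$ is not $(1-\delta)$-boundary sparse in $A$. Let $X\in\{S\cap A,\,A\setminus S\}$ satisfy $w(X,V\setminus A)=\min\{w(S\cap A,V\setminus A),w(A\setminus S,V\setminus A)\}$. Define $S'=S\setminus A$ if $X=S\cap A$, and $S'=S\cup A$ if $X=A\setminus S$. Then $$w(S',V\setminus S')\le(1+\tfrac{3\delta}{2})\,w(S,V\setminus S).$$
   Context: $w(P,Q)$ is the number of edges (with multiplicity) with one endpoint in $P$ and the other in $Q$, for disjoint $P,Q$. For $C\subseteq V$ and $\delta\le1$, a set $U\subsetneq C$ is $(1-\delta)$-boundary sparse in $C$ if $w(U,C\setminus U)<(1-\delta)\min\{w(U,V\setminus C),\,w(C\setminus U,V\setminus C)\}$. *)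

From mathcomp Require Import all_boot all_order all_algebra.
Set Implicit Arguments. Unset Strict Implicit. Unset Printing Implicit Defensive.
Import Order.TTheory GRing.Theory Num.Theory.

(* An undirected multigraph on the finite vertex set V is given by a
   symmetric multiplicity function m : V -> V -> nat (m u v = number of
   edges between u and v). *)
Definition symmetric_mult (V : finType) (m : V -> V -> nat) : Prop :=
  forall u v, m u v = m v u.

(* w(P,Q): number of edges (with multiplicity) with one endpoint in P and
   the other in Q (meant for disjoint P, Q). *)
Definition wt (V : finType) (m : V -> V -> nat) (P Q : {set V}) : nat :=
  \sum_(u in P) \sum_(v in Q) m u v.

Definition boundary_sparse (R : numDomainType) (V : finType)
  (m : V -> V -> nat) (delta : R) (C U : {set V}) : Prop :=
  U \proper C /\
  ((wt m U (C :\: U))%:R <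
     (1 - delta) * (minn (wt m U (~: C)) (wt m (C :\: U) (~: C)))%:R)%R.

From mathcomp Require Import all_boot all_order all_algebra.
From mathcomp Require Import lra.
Import Order.TTheory GRing.Theory Num.Theory.
Set Implicit Arguments. Unset Strict Implicit.

(* Split V into a = S∩A, b = A∖S, c = S∖A and d = the rest.  Removing a from S
   (case X = S∩A) trades the edges of a towards b and d for those of a towards c,
   and a not being boundary sparse means w(a,b) ≥ (1-δ) w(a, c∪d).  Since
   1/(1-δ) ≤ 1 + 3δ/2 for δ ≤ 1/3, the new cut exceeds the old one by at most
   (3δ/2) w(a,b).  The case X = A∖S is the same argument applied to V∖S. *)

Local Open Scope ring_scope.

Ltac set_by_membership S A :=
  apply/setP => ?; rewrite !inE; by case: (_ \in S); case: (_ \in A).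

(* (1 - δ)(1 + 3δ/2) = 1 + δ(1 - 3δ)/2 ≥ 1. *)
Lemma le_scale_of_one_subr_mul (R : realFieldType) (delta x y : R) :
  0 <= delta -> delta <= 1 / 3 -> 0 <= x -> (1 - delta) * y <= x ->
  y <= (1 + 3 * delta / 2) * x.
Proof.
move=> d0 d13 x0 yx; have [y0 | /ltW y0] := leP 0 y; last first.
  by apply: le_trans y0 _; apply: mulr_ge0 => //; lra.
have scaled : (1 + 3 * delta / 2) * ((1 - delta) * y) <= (1 + 3 * delta / 2) * x.
  by apply: ler_wpM2l => //; lra.
have : 0 <= delta * (1 - 3 * delta) * y by rewrite !mulr_ge0 //; lra.
nra.
Qed.

Section Cuts.

Variables (V : finType) (m : V -> V -> nat).
Hypothesis hsym : symmetric_mult m.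

Lemma wtUl (P P' Q : {set V}) :
  [disjoint P & P'] -> wt m (P :|: P') Q = (wt m P Q + wt m P' Q)%N.
Proof. by move=> dis; rewrite /wt -bigU //; apply: eq_bigl => u; rewrite !inE. Qed.

Lemma wtC (P Q : {set V}) : wt m P Q = wt m Q P.
Proof.
by rewrite /wt exchange_big; apply: eq_bigr => u _; apply: eq_bigr => v _; exact: hsym.
Qed.

Lemma wtUr (P Q Q' : {set V}) :
  [disjoint Q & Q'] -> wt m P (Q :|: Q') = (wt m P Q + wt m P Q')%N.
Proof. by move=> dis; rewrite wtC wtUl // -!(wtC P). Qed.

Lemma wt_cutC (P : {set V}) : wt m (~: P) (~: ~: P) = wt m P (~: P).
Proof. by rewrite setCK wtC. Qed.

Lemma not_boundary_sparse (R : realDomainType) (delta : R) (C U : {set V}) :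
  U \proper C -> ~ boundary_sparse m delta C U ->
  (1 - delta) * (minn (wt m U (~: C)) (wt m (C :\: U) (~: C)))%:R <=
    (wt m U (C :\: U))%:R.
Proof. by move=> UC ns; rewrite leNgt; apply/negP => lt; apply: ns; split. Qed.

Lemma cut_setD_le (R : realFieldType) (delta : R) (S A : {set V}) :
  0 <= delta -> delta <= 1 / 3 ->
  (1 - delta) * (wt m (S :&: A) (~: A))%:R <= (wt m (S :&: A) (A :\: S))%:R ->
  (wt m (S :\: A) (~: (S :\: A)))%:R <= (1 + 3 * delta / 2) * (wt m S (~: S))%:R.
Proof.
move=> d0 d13.
set a := S :&: A; set b := A :\: S; set c := S :\: A; set d := ~: (S :|: A).
have ab : [disjoint a & b] by rewrite -setI_eq0; apply/eqP; set_by_membership S A.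
have ac : [disjoint a & c] by rewrite -setI_eq0; apply/eqP; set_by_membership S A.
have bd : [disjoint b & d] by rewrite -setI_eq0; apply/eqP; set_by_membership S A.
have cd : [disjoint c & d] by rewrite -setI_eq0; apply/eqP; set_by_membership S A.
have abd : [disjoint a :|: b & d] by rewrite -setI_eq0; apply/eqP; set_by_membership S A.
have cutS : wt m S (~: S) = (wt m a b + wt m a d + wt m c b + wt m c d)%N.
  have [-> ->] : S = a :|: c /\ ~: S = b :|: d.
    by split; set_by_membership S A.
  by rewrite wtUl // !wtUr // !addnA.
have cutc : wt m c (~: c) = (wt m c a + wt m c b + wt m c d)%N.
  have -> : ~: c = a :|: b :|: d by set_by_membership S A.
  by rewrite !wtUr.
have -> : ~: A = c :|: d by set_by_membership S A.
rewrite wtUr // (wtC a c) natrD => /(le_scale_of_one_subr_mul d0 d13 (ler0n _ _)) sparse.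
rewrite cutc cutS !natrD.
have : 0 <= 3 * delta / 2 * ((wt m a d)%:R + (wt m c b)%:R + (wt m c d)%:R).
  by rewrite !mulr_ge0 ?addr_ge0 //; lra.
have := ler0n R (wt m a d); lra.
Qed.

End Cuts.

Theorem mainTheorem8 (R : realFieldType) (V : finType) (m : V -> V -> nat)
  (hsym : symmetric_mult m) (delta : R)
  (hd0 : (0 <= delta)%R) (hd1 : (delta <= 1 / 3)%R)
  (A S : {set V})
  (hcross1 : S :&: A != set0) (hcross2 : A :\: S != set0)
  (hns : ~ boundary_sparse m delta A (S :&: A))
  (X : {set V}) (hX : X = S :&: A \/ X = A :\: S)
  (hmin : wt m X (~: A) = minn (wt m (S :&: A) (~: A)) (wt m (A :\: S) (~: A))) :
  let S' := if X == S :&: A then S :\: A else S :|: A in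
  ((wt m S' (~: S'))%:R <= (1 + 3 * delta / 2) * (wt m S (~: S))%:R)%R.
Proof.
have AS : A :\: (S :&: A) = A :\: S by set_by_membership S A.
have proper_SA : S :&: A \proper A.
  rewrite properEneq subsetIr andbT; apply: contraNneq hcross2 => SA.
  by apply/eqP/setP => x; rewrite -SA !inE; case: (x \in S).
have := not_boundary_sparse proper_SA hns; rewrite AS -hmin => sparse.
rewrite /=; case: ifP => [/eqP XSA | XSA].
  by rewrite XSA in sparse; apply: cut_setD_le.
have XAS : X = A :\: S by case: hX => // XSA'; rewrite XSA' eqxx in XSA.
have -> : S :|: A = ~: (~: S :\: A) by set_by_membership S A.
rewrite wt_cutC // -[in X in _ <= _ * X]wt_cutC //; apply: cut_setD_le => //.
have [-> ->] : ~: S :&: A = A :\: S /\ A :\: ~: S = S :&: A.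
  by split; set_by_membership S A.
by rewrite XAS (wtC hsym (S :&: A)) in sparse.
Qed.
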